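(* Consider the differential-algebraic system with input $u\in\mathbb R^{n_g+1}$, state $(\varphi,\omega_g)$ (where $\varphi=\varphi_g+\varphi_\ell$) and output $y$: \[ \dot\varphi_g=E_g^{\top}\omega_g,\qquad M\dot\omega_g=-D\omega_g-E_g\nabla U(\varphi)+p_g^*+u,\qquad 0=-E_\ell\nabla U(\varphi)+p_\ell^*,\qquad y=\omega_g . \] Let $(\overline\varphi,\overline\omega_g)$, with $R_\varphi^{\top}\overline\varphi\in(-\tfrac{\pi}{2},\tfrac{\pi}{2})^m$, be an equilibrium of this system for some constant input $u=\overline u$, and let $\overline y=\overline\omega_g$. Then this system is output strictly incrementally passive with respect to $(\overline u,(\overline\varphi,\overline\omega_g),\overline y)$. In particular, the storage function \[ S(\varphi,\omega_g)=\tfrac12(\omega_g-\overline\omega_g)^{\top}M(\omega_g-\overline\omega_g)+U(\varphi)-U(\overline\varphi)-(\varphi-\overline\varphi)^{\top}\nabla U(\overline\varphi) \] satisfies, along solutions, \[ \dot S=-(\omega_g-\overline\omega_g)^{\top}D(\omega_g-\overline\omega_g)+(\omega_g-\overline\omega_g)^{\top}(u-\overline u). \] Moreover, $S$ has a local strict minimum at $(\overline\varphi,\overline\omega_g)$.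
   Context: Power network: $\mathcal G=(\mathcal V,\mathcal E)$ is a connected undirected graph with buses $\mathcal V=\{0,1,\dots,n\}$ and $m$ edges; each edge $\{i,j\}$ has a susceptance $\beta_{ij}<0$, and $V_i>0$ are constant voltage magnitudes. Generator buses are $\mathcal V_g=\{0,1,\dots,n_g\}$ and load buses $\mathcal V_\ell=\mathcal V\setminus\mathcal V_g$. With an arbitrary orientation of edges, $R\in\mathbb R^{(n+1)\times m}$ is the incidence matrix ($R_{ik}=1$ if $i$ is the sink of edge $k$, $-1$ if it is the source, $0$ otherwise); $\Gamma=\mathrm{diag}(\gamma_k)$ with $\gamma_k=|\beta_{ij}|V_iV_j$ for edge $k\sim\{i,j\}$. $R_\varphi\in\mathbb R^{n\times m}$ is $R$ with its first row (bus $0$) removed. $E\in\mathbb R^{(n+1)\times n}$ is defined by $E^{\top}=[-\mathbb 1_n\ \ I_n]$ and partitioned as $E^{\top}=[E_g^{\top}\ E_\ell^{\top}]$, where $E_g$ ($E_\ell$) collects the rows of $E$ indexed by $\mathcal V_g$ ($\mathcal V_\ell$). $U(\varphi)=-\mathbb 1_m^{\top}\Gamma\,\mathbf{cos}(R_\varphi^{\top}\varphi)$ (cosine elementwise), so $\nabla U(\varphi)=R_\varphi\Gamma\,\mathbf{sin}(R_\varphi^{\top}\varphi)$. $M=\mathrm{diag}(M_i)$, $D=\mathrm{diag}(D_i)$ with $M_i,D_i>0$ for $i\in\mathcal V_g$; $p_g^*\in\mathbb R^{n_g+1}$ and $p_\ell^*\in\mathbb R^{n-n_g}$ are constant vectors;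 $\varphi_g,\varphi_\ell\in\mathbb R^n$, $\varphi=\varphi_g+\varphi_\ell$, and $\varphi_\ell$ plays the role of the algebraic variable. An equilibrium for the constant input $\overline u$ is a point $(\overline\varphi,\overline\omega_g)$ with $\overline\varphi\in\mathbb R^n$ and $\overline\omega_g=\mathbb 1\omega^*$ for some $\omega^*\in\mathbb R$, satisfying $0=-D\overline\omega_g-E_g\nabla U(\overline\varphi)+p_g^*+\overline u$ and $0=-E_\ell\nabla U(\overline\varphi)+p_\ell^*$. Incremental passivity: a DAE $\dot x_o=f(x_o,x_a,u)$, $0=g(x_o,x_a)$, $y=h(x_o,u)$ with state $x=(x_o,x_a)$ is incrementally passive with respect to $(\overline u,\overline x,\overline y)$, $\overline y=h(\overline x_o,\overline u)$, if there are a continuously differentiable function $S(x)$, nonnegative on a (possibly small) state set $\mathcal X$, and a positive semidefinite matrix $Q$ such that $\dot S\le-(y-\overline y)^{\top}Q(y-\overline y)+(y-\overline y)^{\top}(u-\overline u)$ for all $x\in\mathcal X$ and all inputs $u$; it is output strictly incrementally passive if moreover $Q$ is positive definite. *)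

From HB Require Import structures.
From mathcomp Require Import all_boot all_order all_algebra.
From mathcomp Require Import all_classical all_reals all_analysis.
Set Implicit Arguments. Unset Strict Implicit. Unset Printing Implicit Defensive.
Import Order.TTheory GRing.Theory Num.Theory.
Import numFieldNormedType.Exports.
Local Open Scope classical_set_scope.
Local Open Scope ring_scope.

Section Generic.
Variable R : realType.

Definition qform p (Q : 'M[R]_p) (v w : 'cV[R]_p) : R := (v^T *m Q *m w) 0 0.
Definition ip p (v w : 'cV[R]_p) : R := (v^T *m w) 0 0.

Definition pos_semidef p (Q : 'M[R]_p) :=
  Q^T = Q /\ forall v : 'cV[R]_p, 0 <= qform Q v v.
Definition pos_def p (Q : 'M[R]_p) :=
  Q^T = Q /\ forall v : 'cV[R]_p, v != 0 -> 0 < qform Q v v.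

Definition C1 (X : normedModType R) (S : X -> R) :=
  (forall x, differentiable S x) /\ (forall v : X, continuous (fun x => 'D_v S x)).

Definition dae_solution (Xo Xa Z : normedModType R) p
  (f : Xo -> Xa -> 'cV[R]_p -> Xo) (g : Xo -> Xa -> Z)
  (a b : R) (xo : R -> Xo) (xa : R -> Xa) (u : R -> 'cV[R]_p) :=
  forall t, a < t < b ->
    [/\ derivable xo t 1, derivable xa t 1,
        derive1 xo t = f (xo t) (xa t) (u t) & g (xo t) (xa t) = 0].

Definition incr_passive_Q (Xo Xa Z : normedModType R) p
  (f : Xo -> Xa -> 'cV[R]_p -> Xo) (g : Xo -> Xa -> Z) (h : Xo -> 'cV[R]_p -> 'cV[R]_p)
  (ubar : 'cV[R]_p) (xobar : Xo) (xabar : Xa) (Q : 'M[R]_p) :=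
  let ybar := h xobar ubar in
  exists (S : Xo * Xa -> R) (X : set (Xo * Xa)),
    [/\ C1 S, nbhs (xobar, xabar) X, (forall x, X x -> 0 <= S x) &
        forall a b xo xa u, dae_solution f g a b xo xa u ->
        forall t, a < t < b -> X (xo t, xa t) ->
          derivable (fun s => S (xo s, xa s)) t 1 /\
          derive1 (fun s => S (xo s, xa s)) t <=
            - qform Q (h (xo t) (u t) - ybar) (h (xo t) (u t) - ybar)
            + ip (h (xo t) (u t) - ybar) (u t - ubar)].

Definition incr_passive (Xo Xa Z : normedModType R) p
  (f : Xo -> Xa -> 'cV[R]_p -> Xo) (g : Xo -> Xa -> Z) (h : Xo -> 'cV[R]_p -> 'cV[R]_p)
  (ubar : 'cV[R]_p) (xobar : Xo) (xabar : Xa) :=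
  exists Q : 'M[R]_p, pos_semidef Q /\ incr_passive_Q f g h ubar xobar xabar Q.

Definition output_strictly_incr_passive (Xo Xa Z : normedModType R) p
  (f : Xo -> Xa -> 'cV[R]_p -> Xo) (g : Xo -> Xa -> Z) (h : Xo -> 'cV[R]_p -> 'cV[R]_p)
  (ubar : 'cV[R]_p) (xobar : Xo) (xabar : Xa) :=
  exists Q : 'M[R]_p, pos_def Q /\ incr_passive_Q f g h ubar xobar xabar Q.

End Generic.

Section Network.
Variable R : realType.

Definition simple_graph n m (src snk : 'I_m -> 'I_(n.+1)) :=
  (forall k, src k != snk k) /\
  (forall k k', [set src k; snk k] = [set src k'; snk k'] -> k = k').

Definition adj n m (src snk : 'I_m -> 'I_(n.+1)) : rel 'I_(n.+1) :=
  fun i j => [exists k, ((src k == i) && (snk k == j)) || ((src k == j) && (snk k == i))].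

Definition connected_graph n m (src snk : 'I_m -> 'I_(n.+1)) :=
  forall i j, connect (adj src snk) i j.

Definition incidence n m (src snk : 'I_m -> 'I_(n.+1)) : 'M[R]_(n.+1, m) :=
  \matrix_(i, k) (if i == snk k then 1 else if i == src k then -1 else 0).

Definition Rphi n m (src snk : 'I_m -> 'I_(n.+1)) : 'M[R]_(n, m) :=
  \matrix_(i, k) incidence src snk (lift ord0 i) k.

Definition gam n m (src snk : 'I_m -> 'I_(n.+1)) (beta : 'I_m -> R) (V : 'I_(n.+1) -> R)
  (k : 'I_m) : R := `|beta k| * V (src k) * V (snk k).

Definition Gam n m (src snk : 'I_m -> 'I_(n.+1)) beta V : 'M[R]_m :=
  diag_mx (\row_k gam src snk beta V k).

(* E^T = [ -1_n  I_n ] *)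
Definition Emx n : 'M[R]_(n.+1, n) :=
  \matrix_(i, j) (if i == ord0 then -1 else if (i : nat) == j.+1 then 1 else 0).
(* rows of E indexed by generator buses 0..ng *)
Definition Eg n ng : 'M[R]_(ng.+1, n) := \matrix_(i, j) Emx n (inord i) j.
(* rows of E indexed by load buses ng+1..n *)
Definition El n ng : 'M[R]_(n - ng, n) := \matrix_(i, j) Emx n (inord (ng.+1 + i)) j.

Definition Upot n m (src snk : 'I_m -> 'I_(n.+1)) beta V (phi : 'cV[R]_n) : R :=
  - \sum_k gam src snk beta V k * cos (((Rphi src snk)^T *m phi) k 0).

Definition gradU n m (src snk : 'I_m -> 'I_(n.+1)) beta V (phi : 'cV[R]_n) : 'cV[R]_n :=
  Rphi src snk *m Gam src snk beta V *m \col_k sin (((Rphi src snk)^T *m phi) k 0).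

(* The power-network DAE.  Differential state xo = (phi_g, omega_g);
   algebraic state xa = theta_l with phi_l = E_l^T theta_l; phi = phi_g + phi_l. *)
Definition pn_f n m ng (src snk : 'I_m -> 'I_(n.+1)) beta V
  (Mv Dv : 'I_(ng.+1) -> R) (pg : 'cV[R]_(ng.+1))
  (xo : 'cV[R]_n * 'cV[R]_(ng.+1)) (xa : 'cV[R]_(n - ng)) (u : 'cV[R]_(ng.+1))
  : 'cV[R]_n * 'cV[R]_(ng.+1) :=
  let phi := xo.1 + (El n ng)^T *m xa in
  let w := xo.2 in
  ((Eg n ng)^T *m w,
   invmx (diag_mx (\row_i Mv i)) *m
     (- (diag_mx (\row_i Dv i) *m w) - Eg n ng *m gradU src snk beta V phi + pg + u)).

Definition pn_g n m ng (src snk : 'I_m -> 'I_(n.+1)) beta V (pl : 'cV[R]_(n - ng))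
  (xo : 'cV[R]_n * 'cV[R]_(ng.+1)) (xa : 'cV[R]_(n - ng)) : 'cV[R]_(n - ng) :=
  - (El n ng *m gradU src snk beta V (xo.1 + (El n ng)^T *m xa)) + pl.

Definition pn_h n ng (xo : 'cV[R]_n * 'cV[R]_(ng.+1)) (u : 'cV[R]_(ng.+1)) : 'cV[R]_(ng.+1) :=
  xo.2.

Definition storage n m ng (src snk : 'I_m -> 'I_(n.+1)) beta V (Mv : 'I_(ng.+1) -> R)
  (phibar : 'cV[R]_n) (wbar : 'cV[R]_(ng.+1)) (phi : 'cV[R]_n) (w : 'cV[R]_(ng.+1)) : R :=
  2^-1 * qform (diag_mx (\row_i Mv i)) (w - wbar) (w - wbar)
  + Upot src snk beta V phi - Upot src snk beta V phibar
  - ip (phi - phibar) (gradU src snk beta V phibar).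

End Network.

From HB Require Import structures.
From mathcomp Require Import all_boot all_order all_algebra.
From mathcomp Require Import all_classical all_reals all_analysis.
From mathcomp Require Import ring lra.
Import Order.TTheory GRing.Theory Num.Theory.
Import numFieldNormedType.Exports.
Local Open Scope classical_set_scope.
Local Open Scope ring_scope.
Set Implicit Arguments.
Unset Strict Implicit.
Unset Printing Implicit Defensive.

(* Writing θ = R_φᵀφ for the line angles, S is ½‖ω - ω̄‖²_M plus Σ_k γ_k times the gap
   between cos and its tangent at θ̄_k, evaluated at θ_k.  On (-π/2, π/2) cos is strictly
   concave, so every gap is positive unless θ_k = θ̄_k; as the graph is connected R_φᵀ is
   injective, whence the strict minimum and S ≥ 0 near the equilibrium.
   Along solutions Ṡ = (ω - ω̄)ᵀ M ω̇ + (∇U(φ) - ∇U(φ̄))ᵀ φ̇ with φ̇ = E_gᵀω + E_lᵀθ̇_l.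
   The load-flow constraint holds at φ and φ̄, so E_l kills ∇U(φ) - ∇U(φ̄); and since ω̄ is
   constant and the columns of E sum to zero, ω̄ᵀE_g(∇U(φ) - ∇U(φ̄)) = 0 as well.  With the
   equilibrium equations what remains is -(ω - ω̄)ᵀD(ω - ω̄) + (ω - ω̄)ᵀ(u - ū). *)

Section Forms.
Variable R : realType.

Lemma trmx_mul_coord p q (A : 'M[R]_(p, q)) (v : 'cV[R]_p) k :
  (A^T *m v) k 0 = \sum_j A j k * v j 0.
Proof. by rewrite !mxE; apply: eq_bigr => j _; rewrite !mxE. Qed.

Lemma ipE p (v w : 'cV[R]_p) : ip v w = \sum_i v i 0 * w i 0.
Proof. by rewrite /ip !mxE; apply: eq_bigr => i _; rewrite !mxE. Qed.

Lemma qform_diagE p (d : 'I_p -> R) (v w : 'cV[R]_p) :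
  qform (diag_mx (\row_i d i)) v w = \sum_i v i 0 * d i * w i 0.
Proof. by rewrite /qform mul_mx_diag !mxE; apply: eq_bigr => i _; rewrite !mxE. Qed.

Lemma qform_ip p (Q : 'M[R]_p) (v w : 'cV[R]_p) : qform Q v w = ip v (Q *m w).
Proof. by rewrite /qform /ip mulmxA. Qed.

Lemma ipC p (v w : 'cV[R]_p) : ip v w = ip w v.
Proof. by rewrite !ipE; apply: eq_bigr => i _; rewrite mulrC. Qed.

Lemma ip0r p (v : 'cV[R]_p) : ip v 0 = 0.
Proof. by rewrite /ip mulmx0 mxE. Qed.

Lemma ip0l p (v : 'cV[R]_p) : ip 0 v = 0.
Proof. by rewrite ipC ip0r. Qed.

Lemma ipDr p (u v w : 'cV[R]_p) : ip u (v + w) = ip u v + ip u w.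
Proof. by rewrite /ip mulmxDr mxE. Qed.

Lemma ipNr p (v w : 'cV[R]_p) : ip v (- w) = - ip v w.
Proof. by rewrite /ip mulmxN mxE. Qed.

Lemma ipBr p (u v w : 'cV[R]_p) : ip u (v - w) = ip u v - ip u w.
Proof. by rewrite ipDr ipNr. Qed.

Lemma ipBl p (u v w : 'cV[R]_p) : ip (u - v) w = ip u w - ip v w.
Proof. by rewrite ipC ipBr !(ipC w). Qed.

Lemma ip_trmx p q (v : 'cV[R]_p) (A : 'M[R]_(q, p)) (w : 'cV[R]_q) :
  ip v (A^T *m w) = ip (A *m v) w.
Proof. by rewrite /ip trmx_mul mulmxA. Qed.

Lemma ip_const_mx p c (v : 'cV[R]_p) : ip (const_mx c) v = c * \sum_i v i 0.
Proof. by rewrite ipE mulr_sumr; apply: eq_bigr => i _; rewrite mxE. Qed.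

Section PositiveDiagonal.
Variables (p : nat) (d : 'I_p -> R).
Hypothesis d_gt0 : forall i, 0 < d i.

Lemma diag_mx_unit : diag_mx (\row_i d i) \in unitmx.
Proof.
rewrite unitmxE det_diag unitfE; apply/prodf_neq0 => i _.
by rewrite mxE gt_eqF.
Qed.

Lemma qform_diag_invmx (v w : 'cV[R]_p) :
  qform (diag_mx (\row_i d i)) v (invmx (diag_mx (\row_i d i)) *m w) = ip v w.
Proof. by rewrite qform_ip mulmxA mulmxV ?mul1mx // diag_mx_unit. Qed.

Lemma qform_diag_ge0 (v : 'cV[R]_p) : 0 <= qform (diag_mx (\row_i d i)) v v.
Proof. by rewrite qform_diagE; apply: sumr_ge0 => i _; have := d_gt0 i; nra. Qed.

Lemma pos_def_diag : pos_def (diag_mx (\row_i d i)).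
Proof.
split=> [|v]; first exact: tr_diag_mx.
apply: contraNT; rewrite -leNgt => v_le0; apply/eqP/matrixP => i j.
rewrite (ord1 j) mxE; apply/eqP; rewrite -sqrf_eq0 eq_le sqr_ge0 andbT.
have term_ge0 k : 0 <= v k 0 * d k * v k 0 by have := d_gt0 k; nra.
have : v i 0 * d i * v i 0 <= 0.
  apply: le_trans v_le0; rewrite qform_diagE (bigD1 i) //= lerDl.
  by apply: sumr_ge0 => k _.
by have := d_gt0 i; nra.
Qed.

End PositiveDiagonal.

End Forms.

Lemma derivable1_pair (R : realType) (U W : normedModType R) (f : R -> U) (g : R -> W) t :
  derivable f t 1 -> derivable g t 1 ->
  derivable (fun s => (f s, g s)) t 1 /\
  derive1 (fun s => (f s, g s)) t = (derive1 f t, derive1 g t).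
Proof.
move=> /derivable1_diffP df /derivable1_diffP dg.
have dfg := differentiable_pair df dg.
split; first exact/derivable1_diffP.
by rewrite derive1E' // diff_pair // -!derive1E'.
Qed.

Lemma near_forall_itvoo (R : realType) (T : topologicalType) (I : finType)
    (F : I -> T -> R) a b x :
  (forall k, continuous (F k)) -> (forall k, a < F k x < b) ->
  \forall y \near x, forall k, a < F k y < b.
Proof.
move=> F_cont F_in; apply: filter_forall => k.
have /andP[aF Fb] := F_in k.
near=> y; apply/andP; split; near: y.
- exact: cvgr_gt (F_cont k x) _ aF.
- exact: cvgr_lt (F_cont k x) _ Fb.
Unshelve. all: by end_near.
Qed.

Section C1Calculus.
Variables (R : realType) (X : normedModType R).

Definition has_C1_diff (F : X -> R) (dF : X -> X -> R) :=
  [/\ forall x, differentiable F x, forall x, 'd F x = dF x :> (X -> R)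
    & forall v, continuous (fun x => dF x v)].

Lemma has_C1_diff_eq F dF G dG : has_C1_diff F dF -> F =1 G ->
  (forall x v, dF x v = dG x v) -> has_C1_diff G dG.
Proof.
move=> FdF /funext <- dFG.
by have <- : dF = dG by apply/funext => x; apply/funext => v; apply: dFG.
Qed.

Lemma has_C1_diff_cst c : has_C1_diff (fun=> c) (fun _ _ => 0).
Proof.
split=> [x|x|v]; first exact: differentiable_cst.
  by rewrite (diff_cst c x).
exact: cst_continuous.
Qed.

Lemma has_C1_diffD F dF G dG : has_C1_diff F dF -> has_C1_diff G dG ->
  has_C1_diff (fun x => F x + G x) (fun x v => dF x v + dG x v).
Proof.
move=> [dif_F dFE cont_F] [dif_G dGE cont_G]; split=> [x|x|v].
- exact: differentiableD.
- by rewrite diffD // dFE dGE.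
- by move=> x; apply: (@continuousD _ R^o); [apply: cont_F|apply: cont_G].
Qed.

Lemma has_C1_diffZ c F dF : has_C1_diff F dF ->
  has_C1_diff (fun x => c * F x) (fun x v => c * dF x v).
Proof.
move=> [dif_F dFE cont_F]; split=> [x|x|v].
- exact: differentiableZ.
- by rewrite diffZ // dFE.
- move=> x; apply: (@continuousZ _ R^o _ (fun=> c) (fun x => dF x v)).
    exact: cst_continuous.
  exact: cont_F.
Qed.

Lemma has_C1_diffM F dF G dG : has_C1_diff F dF -> has_C1_diff G dG ->
  has_C1_diff (fun x => F x * G x) (fun x v => F x * dG x v + G x * dF x v).
Proof.
move=> [dif_F dFE cont_F] [dif_G dGE cont_G]; split=> [x|x|v].
- exact: differentiableM.
- by rewrite diffM // dFE dGE.
- move=> x; apply: (@continuousD _ _ _ (fun x => F x * dG x v) (fun x => G x * dF x v));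
    apply: continuousM; by [exact: differentiable_continuous|apply: cont_G|apply: cont_F].
Qed.

Lemma has_C1_diff_sum (I : Type) (r : seq I) (F : I -> X -> R) dF :
  (forall i, has_C1_diff (F i) (dF i)) ->
  has_C1_diff (fun x => \sum_(i <- r) F i x) (fun x v => \sum_(i <- r) dF i x v).
Proof.
move=> FdF; elim: r => [|i r IHr].
  by apply: has_C1_diff_eq (has_C1_diff_cst 0) _ _ => [x|x v]; rewrite big_nil.
by apply: has_C1_diff_eq (has_C1_diffD (FdF i) IHr) _ _ => [x|x v]; rewrite big_cons.
Qed.

Lemma has_C1_diff_comp (f df : R -> R) F dF :
  (forall s : R, is_derive s (1 : R) f (df s)) -> continuous df -> has_C1_diff F dF ->
  has_C1_diff (fun x => f (F x)) (fun x v => df (F x) * dF x v).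
Proof.
move=> f_df cont_df [dif_F dFE cont_F].
have dif_f s : differentiable f s.
  by apply/derivable1_diffP; exact: (ex_derive (is_derive := f_df s)).
split=> [x|x|v].
- exact: differentiable_comp.
- rewrite diff_comp //; apply/funext => v /=.
  rewrite deriv1E; last exact/derivable1_diffP.
  by rewrite dFE /= derive1E (derive_val (is_derive := f_df (F x))) mulrC.
- move=> x; apply: continuousM; last exact: cont_F.
  exact: continuous_comp (differentiable_continuous (dif_F x)) (cont_df (F x)).
Qed.

Lemma has_C1_diff_linear (l : X -> R) : linear l -> continuous l ->
  has_C1_diff l (fun _ v => l v).
Proof.
move=> lin_l cont_l.
pose L : {linear X -> R} := HB.pack l (GRing.isLinear.Build _ _ _ _ _ lin_l).
have -> : l = L by [].
split=> [x|x|v]; [exact: linear_differentiable|by rewrite diff_lin|exact: cst_continuous].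
Qed.

Lemma has_C1_diff_coord p (pr : X -> 'cV[R]_p) (j : 'I_p) :
  linear pr -> continuous pr -> has_C1_diff (fun x => pr x j 0) (fun _ v => pr v j 0).
Proof.
move=> lin_pr cont_pr; apply: has_C1_diff_linear => [k x y|x].
  by rewrite lin_pr !mxE.
apply: (@continuous_comp _ _ _ pr (fun M : 'cV[R]_p => M j 0)).
  exact: cont_pr.
exact: coord_continuous.
Qed.

Lemma has_C1_diff_mulmx_coord p q (pr : X -> 'cV[R]_p) (A : 'M[R]_(p, q)) k :
  (forall j, has_C1_diff (fun x => pr x j 0) (fun _ v => pr v j 0)) ->
  has_C1_diff (fun x => (A^T *m pr x) k 0) (fun _ v => (A^T *m pr v) k 0).
Proof.
move=> pr_C1.
apply: has_C1_diff_eq (has_C1_diff_sum _ (fun j => has_C1_diffZ (A j k) (pr_C1 j))) _ _;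
  by move=> *; rewrite trmx_mul_coord.
Qed.

Lemma has_C1_diff_continuous F dF : has_C1_diff F dF -> continuous F.
Proof. by move=> [dif_F _ _] x; apply: differentiable_continuous. Qed.

Lemma has_C1_diff_C1 F dF : has_C1_diff F dF -> C1 F.
Proof.
move=> [dif_F dFE cont_F]; split=> // v.
have -> : (fun x => 'D_v F x) = (fun x => dF x v).
  by apply/funext => x; rewrite deriveE // dFE.
exact: cont_F.
Qed.

Lemma has_C1_diff_derive1 F dF (gamma : R -> X) t :
  has_C1_diff F dF -> derivable gamma t 1 ->
  derivable (F \o gamma) t 1 /\ derive1 (F \o gamma) t = dF (gamma t) (derive1 gamma t).
Proof.
move=> [dif_F dFE _] /derivable1_diffP dif_gamma.
have dif_Fgamma := differentiable_comp dif_gamma (dif_F (gamma t)).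
split; first exact/derivable1_diffP.
by rewrite derive1E' // diff_comp // dFE /= -derive1E'.
Qed.

End C1Calculus.

Section CosTangent.
Variable R : realType.

Definition cos_tangent_gap (a s : R) := cos a - cos s - (s - a) * sin a.

Lemma is_derive_cos_tangent_gap (a s : R) :
  is_derive s (1 : R) (cos_tangent_gap a) (sin s - sin a).
Proof.
apply: is_derive_eq; rewrite /GRing.scale /=; ring.
Qed.

Lemma cos_tangent_gap_id a : cos_tangent_gap a a = 0.
Proof. by rewrite /cos_tangent_gap !subrr mul0r subr0. Qed.

Lemma cos_MVT (a b : R) : a < b ->
  exists2 c, a < c < b & cos b - cos a = - sin c * (b - a).
Proof.
move=> ab; have [c c_ab ->] := MVT ab (fun x _ => is_derive_cos x)
  (continuous_subspaceT (@continuous_cos R)).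
by exists c => //; move: c_ab; rewrite in_itv.
Qed.

Lemma cos_tangent_gap_gt0 a s : - (pi / 2) < a < pi / 2 -> - (pi / 2) < s < pi / 2 ->
  s != a -> 0 < cos_tangent_gap a s.
Proof.
move=> /andP[a_lo a_hi] /andP[s_lo s_hi].
have sin_lt x y : - (pi / 2) < x -> y < pi / 2 -> x < y -> sin x < sin y.
  move=> x_lo y_hi xy; rewrite ltr_sin // in_itv /=; apply/andP; split; lra.
rewrite /cos_tangent_gap neq_lt => /orP[s_lt_a|a_lt_s].
- have [c /andP[sc ca] ->] := cos_MVT s_lt_a.
  have -> : - sin c * (a - s) - (s - a) * sin a = (a - s) * (sin a - sin c) by ring.
  by apply: mulr_gt0; rewrite subr_gt0 //; apply: sin_lt => //; lra.
- have [c /andP[ac cs] cosE] := cos_MVT a_lt_s.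
  have -> : cos a - cos s - (s - a) * sin a = (s - a) * (sin c - sin a).
    by rewrite -[cos a - cos s]opprB cosE; ring.
  by apply: mulr_gt0; rewrite subr_gt0 //; apply: sin_lt => //; lra.
Qed.

Lemma cos_tangent_gap_ge0 a s : - (pi / 2) < a < pi / 2 -> - (pi / 2) < s < pi / 2 ->
  0 <= cos_tangent_gap a s.
Proof.
move=> a_in s_in; have [->|sa] := eqVneq s a; first by rewrite cos_tangent_gap_id.
exact/ltW/cos_tangent_gap_gt0.
Qed.

End CosTangent.

Section Incidence.
Variables (R : realType) (n m : nat) (src snk : 'I_m -> 'I_(n.+1)).
Hypothesis src_snk : forall k, src k != snk k.

(* [Rphi] omits bus 0, which acts as a ground of potential 0 *)
Definition ground_pad (d : 'cV[R]_n) (i : 'I_(n.+1)) : R :=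
  if unlift ord0 i is Some j then d j 0 else 0.

Lemma Rphi_tr_mulE (d : 'cV[R]_n) k :
  ((Rphi R src snk)^T *m d) k 0 = ground_pad d (snk k) - ground_pad d (src k).
Proof.
have pad0 : ground_pad d ord0 = 0 by rewrite /ground_pad unlift_none.
have pick a : \sum_(i < n.+1) (i == a)%:R * ground_pad d i = ground_pad d a.
  by rewrite (bigD1 a) //= eqxx mul1r big1 ?addr0 // => i /negbTE ->; rewrite mul0r.
rewrite trmx_mul_coord -(pick (snk k)) -(pick (src k)) -sumrB big_ord_recl.
rewrite pad0 !mulr0 subr0 add0r; apply: eq_bigr => j _.
rewrite /ground_pad liftK !mxE; case: eqP => [e_snk|]; case: eqP => [e_src|] /=.
- by have := src_snk k; rewrite -e_snk -e_src eqxx.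
all: by move=> *; ring.
Qed.

Lemma Rphi_tr_eq0 (d : 'cV[R]_n) : connected_graph src snk ->
  (Rphi R src snk)^T *m d = 0 -> d = 0.
Proof.
move=> connected d_ker.
have pad_adj i j : adj src snk i j -> ground_pad d i = ground_pad d j.
  move=> /existsP[k /orP[] /andP[/eqP <- /eqP <-]];
  by have := Rphi_tr_mulE d k; rewrite d_ker mxE => /eqP; rewrite eq_sym subr_eq0 => /eqP ->.
have pad_path p i : path (adj src snk) i p -> ground_pad d (last i p) = ground_pad d i.
  elim: p i => [//|j p IHp] i /= /andP[ij jp].
  by rewrite IHp // (pad_adj _ _ ij).
apply/matrixP => j c; rewrite (ord1 c) mxE.
have /connectP[p i_p last_p] := connected ord0 (lift ord0 j).
by have := pad_path p ord0 i_p; rewrite -last_p /ground_pad liftK unlift_none.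
Qed.

End Incidence.

Section Kirchhoff.
Variable R : realType.

Lemma sum_Emx_col n (j : 'I_n) : \sum_i Emx R n i j = 0.
Proof.
rewrite big_ord_recl !mxE eqxx.
rewrite (eq_bigr (fun i : 'I_n => if i == j then 1 else 0)); last first.
  by move=> i _; rewrite mxE /= /bump leq0n add1n eqSS.
by rewrite (bigD1 j) //= eqxx big1 ?addr0 ?addNr // => i /negbTE ->.
Qed.

Lemma sum_Emx_mulmx n (z : 'cV[R]_n) : \sum_i (Emx R n *m z) i 0 = 0.
Proof.
under eq_bigr do rewrite mxE.
by rewrite exchange_big big1 // => j _; rewrite -mulr_suml sum_Emx_col mul0r.
Qed.

Lemma big_ord_inord_split (V : nmodType) n k (G : 'I_n.+1 -> V) : (k <= n)%N ->
  \sum_(i < k.+1) G (inord i) + \sum_(i < n - k) G (inord (k.+1 + i)) = \sum_i G i.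
Proof.
move=> le_k_n.
rewrite [RHS](eq_bigr (fun i : 'I_n.+1 => G (inord i))); last by move=> i _; rewrite inord_val.
rewrite -[RHS](big_mkord xpredT (fun i => G (inord i))).
rewrite [RHS](big_cat_nat _ (n := k.+1)) //= big_mkord; congr (_ + _).
have := big_addn 0 n.+1 k.+1 xpredT (fun i => G (inord i)); rewrite add0n => ->.
by rewrite subSS big_mkord; apply: eq_bigr => i _; rewrite addnC.
Qed.

Lemma sum_Eg_mulmx n ng (z : 'cV[R]_n) : (ng <= n)%N -> El R n ng *m z = 0 ->
  \sum_i (Eg R n ng *m z) i 0 = 0.
Proof.
move=> le_ng_n load0.
have EgE i : (Eg R n ng *m z) i 0 = (Emx R n *m z) (inord i) 0.
  by rewrite !mxE; apply: eq_bigr => j _; rewrite !mxE.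
have ElE i : (El R n ng *m z) i 0 = (Emx R n *m z) (inord (ng.+1 + i)) 0.
  by rewrite !mxE; apply: eq_bigr => j _; rewrite !mxE.
have El_sum0 : \sum_i (El R n ng *m z) i 0 = 0.
  by rewrite load0 big1 // => i _; rewrite mxE.
have := big_ord_inord_split (fun i => (Emx R n *m z) i 0) le_ng_n.
rewrite sum_Emx_mulmx -(eq_bigr _ (fun i _ => EgE i)) -(eq_bigr _ (fun i _ => ElE i)).
by rewrite El_sum0 addr0.
Qed.

End Kirchhoff.

Lemma incremental_power_balance (R : realType) p q r (D : 'M[R]_p)
    (Ag : 'M[R]_(p, q)) (Al : 'M[R]_(r, q)) (w wb pg u ub : 'cV[R]_p) (gU gb : 'cV[R]_q)
    (v : 'cV[R]_r) :
  0 = - (D *m wb) - Ag *m gb + pg + ub ->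
  Al *m gU = Al *m gb -> ip wb (Ag *m (gU - gb)) = 0 ->
  ip (w - wb) (- (D *m w) - Ag *m gU + pg + u) + ip (gU - gb) (Ag^T *m w + Al^T *m v)
  = - qform D (w - wb) (w - wb) + ip (w - wb) (u - ub).
Proof.
move=> equil load balance.
have eq_w := congr1 (ip w) equil; rewrite ip0r !ipDr !ipNr in eq_w.
have eq_wb := congr1 (ip wb) equil; rewrite ip0r !ipDr !ipNr in eq_wb.
have load0 : ip (gU - gb) (Al^T *m v) = 0 by rewrite ip_trmx mulmxBr load subrr ip0l.
have gen : ip (gU - gb) (Ag^T *m w) = ip w (Ag *m gU) - ip w (Ag *m gb).
  by rewrite ip_trmx ipC mulmxBr ipBr.
rewrite mulmxBr ipBr in balance.
rewrite (ipDr (gU - gb)) load0 gen qform_ip mulmxBr !ipBl !ipBr !ipDr !ipNr.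
lra.
Qed.

Section Storage.
Variables (R : realType) (n m ng : nat) (src snk : 'I_m -> 'I_(n.+1))
  (beta : 'I_m -> R) (V : 'I_(n.+1) -> R) (Mv : 'I_(ng.+1) -> R)
  (phibar : 'cV[R]_n) (wbar : 'cV[R]_(ng.+1)).

Local Notation Rp := (Rphi R src snk).
Local Notation gm := (gam src snk beta V).
Local Notation gU := (gradU src snk beta V).
Local Notation S := (storage src snk beta V Mv phibar wbar).
Local Notation Md := (diag_mx (\row_i Mv i)).
Local Notation X := (('cV[R]_n * 'cV[R]_(ng.+1)) * 'cV[R]_(n - ng))%type.

Lemma gradU_ip (phi psi : 'cV[R]_n) :
  ip (gU phi) psi = \sum_k gm k * sin ((Rp^T *m phi) k 0) * (Rp^T *m psi) k 0.
Proof.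
rewrite ipE.
under eq_bigr => j _ do rewrite /gradU /Gam mul_mx_diag mxE big_distrl /=.
rewrite exchange_big /=; apply: eq_bigr => k _.
rewrite [X in _ = _ * X]trmx_mul_coord mulr_sumr; apply: eq_bigr => j _.
by rewrite !mxE; ring.
Qed.

Lemma storage_gapE phi w : S phi w =
  2^-1 * qform Md (w - wbar) (w - wbar)
  + \sum_k gm k * cos_tangent_gap ((Rp^T *m phibar) k 0) ((Rp^T *m phi) k 0).
Proof.
rewrite /storage /Upot ipC gradU_ip.
have -> : \sum_k gm k * cos_tangent_gap ((Rp^T *m phibar) k 0) ((Rp^T *m phi) k 0)
    = \sum_k gm k * cos ((Rp^T *m phibar) k 0) - \sum_k gm k * cos ((Rp^T *m phi) k 0)
      - \sum_k gm k * sin ((Rp^T *m phibar) k 0) * (Rp^T *m (phi - phibar)) k 0.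
  by rewrite -!sumrB; apply: eq_bigr => k _; rewrite /cos_tangent_gap mulmxBr !mxE; ring.
lra.
Qed.

Lemma storage_eq0 : S phibar wbar = 0.
Proof.
rewrite storage_gapE subrr /qform mulmx0 mxE mulr0 add0r big1 // => k _.
by rewrite cos_tangent_gap_id mulr0.
Qed.

Definition phase (x : X) : 'cV[R]_n := x.1.1 + (El R n ng)^T *m x.2.

Definition storage_state (x : X) : R := S (phase x) x.1.2.

Definition storage_rate (x v : X) : R :=
  qform Md (x.1.2 - wbar) v.1.2 + ip (gU (phase x) - gU phibar) (phase v).

Lemma has_C1_diff_phase j :
  has_C1_diff (fun x : X => phase x j 0) (fun _ v => phase v j 0).
Proof.
have lin_fst : linear (fun x : X => x.1.1) by [].
have cont_fst : continuous (fun x : X => x.1.1).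
  by move=> x; apply: continuous_comp; exact: cvg_fst.
have lin_snd : linear (fun x : X => x.2) by [].
have cont_snd : continuous (fun x : X => x.2) by move=> x; exact: cvg_snd.
apply: has_C1_diff_eq (has_C1_diffD (has_C1_diff_coord j lin_fst cont_fst)
  (has_C1_diff_mulmx_coord (El R n ng) j (fun i => has_C1_diff_coord i lin_snd cont_snd)))
  _ _ => [x|x v]; by rewrite [in RHS]mxE.
Qed.

Lemma has_C1_diff_line_angle k :
  has_C1_diff (fun x : X => (Rp^T *m phase x) k 0) (fun _ v => (Rp^T *m phase v) k 0).
Proof. exact: has_C1_diff_mulmx_coord Rp k has_C1_diff_phase. Qed.

Lemma has_C1_diff_storage_state : has_C1_diff storage_state storage_rate.
Proof.
have lin_w : linear (fun x : X => x.1.2) by [].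
have cont_w : continuous (fun x : X => x.1.2).
  by move=> x; apply: continuous_comp; [exact: cvg_fst|exact: cvg_snd].
have dev i : has_C1_diff (fun x : X => x.1.2 i 0 - wbar i 0) (fun _ v => v.1.2 i 0 + 0).
  exact: has_C1_diffD (has_C1_diff_coord i lin_w cont_w) (has_C1_diff_cst _ _).
have cont_gap' a : continuous (fun s : R => sin s - sin a).
  by move=> s; apply: (@continuousB _ R^o); [exact: continuous_sin|exact: cst_continuous].
have kinetic := has_C1_diff_sum (index_enum _)
  (fun i => has_C1_diffZ (2^-1 * Mv i) (has_C1_diffM (dev i) (dev i))).
have potential := has_C1_diff_sum (index_enum _) (fun k => has_C1_diffZ (gm k)
  (has_C1_diff_comp (is_derive_cos_tangent_gap ((Rp^T *m phibar) k 0)) (cont_gap' _)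
    (has_C1_diff_line_angle k))).
apply: has_C1_diff_eq (has_C1_diffD kinetic potential) _ _ => [x|x v].
  rewrite /storage_state storage_gapE qform_diagE mulr_sumr; congr (_ + _).
  by apply: eq_bigr => i _; rewrite !mxE; ring.
rewrite /storage_rate qform_diagE ipBl !gradU_ip -sumrB; congr (_ + _).
  by apply: eq_bigr => i _; rewrite !mxE; field.
by apply: eq_bigr => k _; ring.
Qed.

Lemma storage_state_derive1 (xo : R -> 'cV[R]_n * 'cV[R]_(ng.+1))
    (xa : R -> 'cV[R]_(n - ng)) t :
  derivable xo t 1 -> derivable xa t 1 ->
  derivable (fun s => storage_state (xo s, xa s)) t 1 /\
  derive1 (fun s => storage_state (xo s, xa s)) t
    = storage_rate (xo t, xa t) (derive1 xo t, derive1 xa t).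
Proof.
move=> dxo dxa; have [dx <-] := derivable1_pair dxo dxa.
exact: (has_C1_diff_derive1 (gamma := fun s => (xo s, xa s)) has_C1_diff_storage_state dx).
Qed.

Definition line_angles_in_halfpi (phi : 'cV[R]_n) :=
  forall k, - (pi / 2) < (Rp^T *m phi) k 0 < pi / 2.

Hypotheses (gam_gt0 : forall k, 0 < gm k) (Mv_gt0 : forall i, 0 < Mv i)
  (angles_bar : line_angles_in_halfpi phibar).

Lemma storage_ge0 phi w : line_angles_in_halfpi phi -> 0 <= S phi w.
Proof.
move=> angles; rewrite storage_gapE; apply: addr_ge0.
  by apply: mulr_ge0; [rewrite invr_ge0 ler0n|exact: qform_diag_ge0].
by apply: sumr_ge0 => k _; apply: mulr_ge0; [exact: ltW|exact: cos_tangent_gap_ge0].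
Qed.

Lemma near_line_angles_in_halfpi (x0 : X) : phase x0 = phibar ->
  \forall x \near x0, line_angles_in_halfpi (phase x).
Proof.
move=> x0E; apply: (@near_forall_itvoo _ _ _ (fun k x => (Rp^T *m phase x) k 0)).
  by move=> k; exact: has_C1_diff_continuous (has_C1_diff_line_angle k).
by rewrite x0E.
Qed.

Hypotheses (src_snk : forall k, src k != snk k) (connected : connected_graph src snk).

Lemma storage_gt0 phi w : line_angles_in_halfpi phi -> (phi, w) != (phibar, wbar) ->
  0 < S phi w.
Proof.
move=> angles; rewrite storage_gapE.
have kinetic_ge0 : 0 <= 2^-1 * qform Md (w - wbar) (w - wbar).
  by apply: mulr_ge0; [rewrite invr_ge0 ler0n|exact: qform_diag_ge0].
have gap_ge0 k : 0 <= gm k * cos_tangent_gap ((Rp^T *m phibar) k 0) ((Rp^T *m phi) k 0).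
  by apply: mulr_ge0; [exact: ltW|exact: cos_tangent_gap_ge0].
rewrite xpair_eqE negb_and => /orP[phi_ne|w_ne].
- have [k angle_ne] : exists k, (Rp^T *m phi) k 0 != (Rp^T *m phibar) k 0.
    apply/existsP; move: phi_ne; apply: contraR; rewrite negb_exists => /forallP same.
    rewrite -subr_eq0; apply/eqP/(Rphi_tr_eq0 src_snk connected).
    rewrite mulmxBr; apply/eqP; rewrite subr_eq0; apply/eqP/matrixP => i j.
    by rewrite (ord1 j); apply/eqP/negPn/same.
  apply: ltr_wpDl kinetic_ge0 _; rewrite (bigD1 k) //=.
  apply: ltr_wpDr; first exact: sumr_ge0.
  by apply: mulr_gt0; [exact: gam_gt0|exact: cos_tangent_gap_gt0].
- apply: ltr_wpDr; first exact: sumr_ge0.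
  apply: mulr_gt0; first by rewrite invr_gt0 ltr0n.
  by apply: (pos_def_diag Mv_gt0).2; rewrite subr_eq0.
Qed.

Lemma storage_strict_local_min : exists2 e : R, 0 < e &
  forall phi w, `|phi - phibar| < e -> (phi, w) != (phibar, wbar) -> S phibar wbar < S phi w.
Proof.
have lin_id : linear (@id 'cV[R]_n) by [].
have cont_id : continuous (@id 'cV[R]_n) by move=> x; exact: cvg_id.
have angle_cont k : continuous (fun phi : 'cV[R]_n => (Rp^T *m phi) k 0).
  exact: has_C1_diff_continuous
    (has_C1_diff_mulmx_coord Rp k (fun j => has_C1_diff_coord j lin_id cont_id)).
have [e e_gt0 ball_angles] := (nbhs_ballP _ _).1 (near_forall_itvoo angle_cont angles_bar).
exists e => // phi w near_phi ne; rewrite storage_eq0; apply: storage_gt0 ne.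
by apply: ball_angles; rewrite -ball_normE /ball_ /= distrC.
Qed.

End Storage.

Section Dissipation.
Variables (R : realType) (n m ng : nat) (src snk : 'I_m -> 'I_(n.+1))
  (beta : 'I_m -> R) (V : 'I_(n.+1) -> R) (Mv Dv : 'I_(ng.+1) -> R)
  (pg : 'cV[R]_(ng.+1)) (pl : 'cV[R]_(n - ng)) (ubar : 'cV[R]_(ng.+1))
  (phibar : 'cV[R]_n) (wstar : R).

Local Notation wbar := (const_mx wstar : 'cV[R]_(ng.+1)).
Local Notation gU := (gradU src snk beta V).
Local Notation Dd := (diag_mx (\row_i Dv i)).

Hypotheses (le_ng_n : (ng <= n)%N) (Mv_gt0 : forall i, 0 < Mv i)
  (gen_eq : 0 = - (Dd *m wbar) - Eg R n ng *m gU phibar + pg + ubar)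
  (load_eq : 0 = - (El R n ng *m gU phibar) + pl).

Lemma storage_dissipation a b xo xa u :
  dae_solution (pn_f src snk beta V Mv Dv pg) (pn_g src snk beta V pl) a b xo xa u ->
  forall t, a < t < b ->
  let St := fun s => storage src snk beta V Mv phibar wbar
    ((xo s).1 + (El R n ng)^T *m xa s) (xo s).2 in
  derivable St t 1 /\
  derive1 St t = - qform Dd ((xo t).2 - wbar) ((xo t).2 - wbar)
                 + ip ((xo t).2 - wbar) (u t - ubar).
Proof.
move=> sol t t_ab St; have [dxo dxa xo'E load_t] := sol t t_ab.
have [dSt dStE] := storage_state_derive1 src snk beta V Mv phibar wbar dxo dxa.
split; first exact: dSt.
rewrite [LHS]dStE /storage_rate /phase /= xo'E /pn_f /= qform_diag_invmx //.
have load_match : El R n ng *m gU ((xo t).1 + (El R n ng)^T *m xa t) = El R n ng *m gU phibar.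
  by apply: oppr_inj; apply: (addIr pl); rewrite -load_eq; exact: load_t.
apply: incremental_power_balance; [exact: gen_eq|exact: load_match|].
by rewrite ip_const_mx sum_Eg_mulmx ?mulr0 // mulmxBr load_match subrr.
Qed.

End Dissipation.

Unset Implicit Arguments.
Set Strict Implicit.

Theorem proposition1 (R : realType) (n m ng : nat)
  (src snk : 'I_m -> 'I_(n.+1)) (beta : 'I_m -> R) (V : 'I_(n.+1) -> R)
  (Mv Dv : 'I_(ng.+1) -> R) (pg : 'cV[R]_(ng.+1)) (pl : 'cV[R]_(n - ng))
  (ubar : 'cV[R]_(ng.+1)) (phigbar : 'cV[R]_n) (thlbar : 'cV[R]_(n - ng))
  (wstar : R) :
  (ng <= n)%N ->
  simple_graph src snk -> connected_graph src snk ->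
  (forall k, beta k < 0) -> (forall i, 0 < V i) ->
  (forall i, 0 < Mv i) -> (forall i, 0 < Dv i) ->
  let phibar := phigbar + (El R n ng)^T *m thlbar in
  let wbar : 'cV[R]_(ng.+1) := const_mx wstar in
  (* equilibrium for the constant input ubar *)
  0 = - (diag_mx (\row_i Dv i) *m wbar) - Eg R n ng *m gradU src snk beta V phibar + pg + ubar ->
  0 = - (El R n ng *m gradU src snk beta V phibar) + pl ->
  (forall k, - (pi / 2) < ((Rphi R src snk)^T *m phibar) k 0 < pi / 2) ->
  let f := pn_f src snk beta V Mv Dv pg in
  let g := pn_g src snk beta V pl in
  let h := @pn_h R n ng in
  let S := storage src snk beta V Mv phibar wbar in
  [/\ output_strictly_incr_passive f g h ubar (phigbar, wbar) thlbar,
      (forall a b xo xa u, dae_solution f g a b xo xa u ->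
        forall t, a < t < b ->
          let St := fun s => S ((xo s).1 + (El R n ng)^T *m xa s) (xo s).2 in
          derivable St t 1 /\
          derive1 St t =
            - qform (diag_mx (\row_i Dv i)) ((xo t).2 - wbar) ((xo t).2 - wbar)
            + ip ((xo t).2 - wbar) (u t - ubar)) &
      (* strict local minimum of S at (phibar, wbar) *)
      exists2 e : R, 0 < e &
        forall phi w, `|phi - phibar| < e -> `|w - wbar| < e ->
          (phi, w) != (phibar, wbar) -> S phibar wbar < S phi w].
Proof.
move=> le_ng_n [src_snk _] connected beta_lt0 V_gt0 Mv_gt0 Dv_gt0 phibar wbar
  gen_eq load_eq angles_bar f g h S.
have gam_gt0 k : 0 < gam src snk beta V k.
  by rewrite /gam !mulr_gt0 ?V_gt0 // normr_gt0 ltr0_neq0.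
have dissipation := storage_dissipation le_ng_n Mv_gt0 gen_eq load_eq.
have [e e_gt0 local_min] :=
  storage_strict_local_min wbar gam_gt0 Mv_gt0 angles_bar src_snk connected.
split.
- exists (diag_mx (\row_i Dv i)); split; first exact: pos_def_diag.
  exists (storage_state src snk beta V Mv phibar wbar),
    [set x | line_angles_in_halfpi src snk (phase x)]; split.
  + apply: has_C1_diff_C1; exact: has_C1_diff_storage_state.
  + exact: near_line_angles_in_halfpi.
  + by move=> x; apply: storage_ge0.
  + move=> a b xo xa u sol t t_ab _.
    by have [dSt ->] := dissipation a b xo xa u sol t t_ab.
- exact: dissipation.
- by exists e => // phi w near_phi _; apply: local_min.
Qed.
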